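(* Assume [LJ1]–[LJ4] and additionally that $$R(t):=J_2\Big(\frac{\gamma+t}{2}\Big)+\frac12\big(J_1(\gamma)+J_1(t)\big)-J_0(\gamma)-\frac32\big(J_{CB}(t)-J_0(\gamma)\big)\le0\quad\text{for all }t\in\operatorname{dom}J_1.$$ Then $B_{IF}(m)=B(\gamma)$ for every $m\in\{1,2,\dots\}\cup\{+\infty\}$, and $B_{AIF}(n)=B_{IJ}$ for every $n\in\{2,3,\dots\}\cup\{+\infty\}$.
   Context: Potentials: $J_1,J_2:\mathbb R\to(-\infty,+\infty]$; $J_{CB}:=J_1+J_2$; $J_0(z):=J_2(z)+\frac12\inf\{J_1(z_1)+J_1(z_2):z_1+z_2=2z\}$; $J_0^{**}$ is the convex lower semicontinuous envelope of $J_0$. Hypotheses: [LJ1] $\{z:J_0(z)=J_0^{**}(z)\}\cap\{z:J_0\text{ is affine in a neighbourhood of }z\}=\emptyset$. [LJ2] for every $z$ with $J_0(z)=J_0^{**}(z)$, the set $\{(z_1,z_2):z_1+z_2=2z,\ J_0(z)=J_2(z)+\frac12(J_1(z_1)+J_1(z_2))\}$ has exactly one element. [LJ3] $J_1,J_2$ are $C^{1,\alpha}$ on their domains for some $0<\alpha\le1$, $J_0$ is $C^1$ on its domain, $\operatorname{dom}J_1=\operatorname{dom}J_2\supset(0,+\infty)$, $\lim_{z\to+\infty}J_j(z)=0$ ($j=1,2$) and $\lim_{z\to+\infty}J_0(z)=:J_0(+\infty)\in\mathbb R$. [LJ4] there is a convex $\Psi:\mathbb R\to[0,+\infty]$ with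 $\lim_{z\to-\infty}\Psi(z)/|z|=+\infty$ and constants $c_1,c_2>0$ with $c_1(\Psi(z)-1)\le J_j(z)\le c_2\max\{\Psi(z),|z|\}$ for all $z\in\mathbb R$, $j=1,2$; there are $\delta_1,\delta_2,\gamma>0$ with $\{\delta_j\}=\operatorname{argmin}J_j$ and $\{\gamma\}=\operatorname{argmin}J_0$; $J_j$ is strictly convex on $(-\infty,\delta_j)\cap\operatorname{dom}J_j$; $J_0(\gamma)<J_0(+\infty)$; and $J_0(z)=J_0^{**}(z)$ for all $z\le\gamma$. Boundary layer energies (with $\mathbb N=\{0,1,2,\dots\}$): $B(\gamma):=\inf_{N\in\mathbb N}\min\{\frac12J_1(v^1-v^0)+\sum_{i\ge0}[J_2(\frac{v^{i+2}-v^i}{2})+\frac12J_1(v^{i+2}-v^{i+1})+\frac12J_1(v^{i+1}-v^i)-J_0(\gamma)]:v:\mathbb N\to\mathbb R,\ v^0=0,\ v^{i+1}-v^i=\gamma\ \forall i\ge N\}$; for $m\in\mathbb N$, $B_{IF}(m):=\inf_{k\in\mathbb N}\min\{\frac12J_1(v^1-v^0)+\sum_{i=0}^{k-1}[J_2(\frac{v^{i+2}-v^i}{2})+\frac12J_1(v^{i+2}-v^{i+1})+\frac12J_1(v^{i+1}-v^i)-J_0(\gamma)]+\frac{2m+1}{2}(J_{CB}(v^{k+1}-v^k)-J_0(\gamma)):v:\mathbb N\to\mathbb R,\ v^0=0\}$, and $B_{IF}(+\infty):=B(\gamma)$; $B_{IJ}:=2B(\gamma)-2J_0(\gamma)$;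 for $n\in\{1,2,\dots\}\cup\{+\infty\}$, $B_{AIF}(n):=B_{IF}(n-1)+B(\gamma)-2J_0(\gamma)$ (with $+\infty-1=+\infty$). *)

From Stdlib Require Import Reals Lra ClassicalEpsilon.
Open Scope R_scope.

Inductive Rbar : Type := Finite (r : R) | p_infty | m_infty.

Definition Rbar_le (x y : Rbar) : Prop :=
  match x, y with
  | m_infty, _ => True
  | _, p_infty => True
  | Finite a, Finite b => a <= b
  | _, _ => False
  end.

Definition Rbar_lt (x y : Rbar) : Prop :=
  match x, y with
  | m_infty, m_infty => False
  | m_infty, _ => True
  | p_infty, _ => False
  | Finite _, p_infty => True
  | Finite a, Finite b => a < b
  | Finite _, m_infty => False
  end.

(* addition; the undetermined case +oo + -oo is set to 0 (never used below
   in a relevant way) *)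
Definition Rbar_plus (x y : Rbar) : Rbar :=
  match x, y with
  | Finite a, Finite b => Finite (a + b)
  | p_infty, m_infty | m_infty, p_infty => Finite 0
  | p_infty, _ | _, p_infty => p_infty
  | m_infty, _ | _, m_infty => m_infty
  end.

Definition Rbar_opp (x : Rbar) : Rbar :=
  match x with Finite a => Finite (- a) | p_infty => m_infty | m_infty => p_infty end.

Definition Rbar_minus (x y : Rbar) : Rbar := Rbar_plus x (Rbar_opp y).

(* multiplication by a real scalar, with 0 * (+-oo) = 0 *)
Definition Rbar_scal (c : R) (x : Rbar) : Rbar :=
  match x with
  | Finite a => Finite (c * a)
  | p_infty => if Rlt_dec 0 c then p_infty else if Rlt_dec c 0 then m_infty else Finite 0
  | m_infty => if Rlt_dec 0 c then m_infty else if Rlt_dec c 0 then p_infty else Finite 0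
  end.

Definition Rbar_max (x y : Rbar) : Rbar :=
  if excluded_middle_informative (Rbar_le x y) then y else x.

Definition Rbar_is_glb (S : Rbar -> Prop) (l : Rbar) : Prop :=
  (forall x, S x -> Rbar_le l x) /\
  (forall m, (forall x, S x -> Rbar_le m x) -> Rbar_le m l).
Definition Rbar_is_lub (S : Rbar -> Prop) (l : Rbar) : Prop :=
  (forall x, S x -> Rbar_le x l) /\
  (forall m, (forall x, S x -> Rbar_le x m) -> Rbar_le l m).

(* inf / sup (they always exist in the extended reals) *)
Definition Rbar_inf (S : Rbar -> Prop) : Rbar :=
  epsilon (inhabits p_infty) (Rbar_is_glb S).
Definition Rbar_sup (S : Rbar -> Prop) : Rbar :=
  epsilon (inhabits m_infty) (Rbar_is_lub S).

Definition Rbar_is_lim (u : nat -> Rbar) (l : Rbar) : Prop :=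
  match l with
  | Finite a => forall eps, 0 < eps -> exists N, forall n, (N <= n)%nat ->
                  exists r, u n = Finite r /\ Rabs (r - a) < eps
  | p_infty => forall M, exists N, forall n, (N <= n)%nat -> Rbar_le (Finite M) (u n)
  | m_infty => forall M, exists N, forall n, (N <= n)%nat -> Rbar_le (u n) (Finite M)
  end.

Definition Rbar_lim (u : nat -> Rbar) : Rbar :=
  epsilon (inhabits p_infty) (Rbar_is_lim u).

Fixpoint Rbar_sum (f : nat -> Rbar) (n : nat) : Rbar :=
  match n with
  | O => Finite 0
  | S k => Rbar_plus (Rbar_sum f k) (f k)
  end.

Definition Rbar_series (f : nat -> Rbar) : Rbar := Rbar_lim (Rbar_sum f).

Definition dom (J : R -> Rbar) (z : R) : Prop := J z <> p_infty.

Definition J_CB (J1 J2 : R -> Rbar) (z : R) : Rbar := Rbar_plus (J1 z) (J2 z).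

Definition J_0 (J1 J2 : R -> Rbar) (z : R) : Rbar :=
  Rbar_plus (J2 z)
    (Rbar_scal (1/2) (Rbar_inf (fun x => exists z1 z2, z1 + z2 = 2 * z /\
                                   x = Rbar_plus (J1 z1) (J1 z2)))).

(* J^** : Fenchel biconjugate = convex lower semicontinuous envelope,
   i.e. the supremum of the affine minorants *)
Definition biconj (J : R -> Rbar) (z : R) : Rbar :=
  Rbar_sup (fun x => exists a b, (forall y, Rbar_le (Finite (a * y + b)) (J y))
                                 /\ x = Finite (a * z + b)).

Definition affine_near (J : R -> Rbar) (z : R) : Prop :=
  exists d a b, 0 < d /\ forall x, Rabs (x - z) < d -> J x = Finite (a * x + b).

(* C^{1,alpha} on the domain (derivative locally alpha-Hoelder: Hoelder on
   every compact interval contained in the domain) *)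
Definition C1alpha_on_dom (J : R -> Rbar) (alpha : R) : Prop :=
  exists f f' : R -> R,
    (forall x, dom J x -> J x = Finite (f x)) /\
    (forall x, dom J x -> derivable_pt_lim f x (f' x)) /\
    (forall a b, a <= b -> (forall x, a <= x <= b -> dom J x) ->
       exists C, forall x y, a <= x <= b -> a <= y <= b -> x <> y ->
         Rabs (f' x - f' y) <= C * Rpower (Rabs (x - y)) alpha).

Definition C1_on_dom (J : R -> Rbar) : Prop :=
  exists f f' : R -> R,
    (forall x, dom J x -> J x = Finite (f x)) /\
    (forall x, dom J x -> derivable_pt_lim f x (f' x)) /\
    (forall x, dom J x -> forall eps, 0 < eps -> exists d, 0 < d /\
       forall y, dom J y -> Rabs (y - x) < d -> Rabs (f' y - f' x) < eps).

Definition lim_pinfty (J : R -> Rbar) (L : R) : Prop :=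
  forall eps, 0 < eps -> exists M, forall z, M < z ->
    exists r, J z = Finite r /\ Rabs (r - L) < eps.

Definition unique_argmin (J : R -> Rbar) (d : R) : Prop :=
  (forall z, Rbar_le (J d) (J z)) /\
  (forall z, (forall w, Rbar_le (J z) (J w)) -> z = d).

Definition Rbar_convex (P : R -> Rbar) : Prop :=
  forall x y t, 0 < t < 1 ->
    Rbar_le (P (t * x + (1 - t) * y))
            (Rbar_plus (Rbar_scal t (P x)) (Rbar_scal (1 - t) (P y))).

Definition strictly_convex_on (J : R -> Rbar) (D : R -> Prop) : Prop :=
  forall x y t, D x -> D y -> x <> y -> 0 < t < 1 ->
    Rbar_lt (J (t * x + (1 - t) * y))
            (Rbar_plus (Rbar_scal t (J x)) (Rbar_scal (1 - t) (J y))).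

Definition LJ1 (J1 J2 : R -> Rbar) : Prop :=
  forall z, J_0 J1 J2 z = biconj (J_0 J1 J2) z -> ~ affine_near (J_0 J1 J2) z.

(* read for z in dom J_0 *)
Definition LJ2 (J1 J2 : R -> Rbar) : Prop :=
  forall z, dom (J_0 J1 J2) z -> J_0 J1 J2 z = biconj (J_0 J1 J2) z ->
    exists z1 z2,
      (z1 + z2 = 2 * z /\
       J_0 J1 J2 z = Rbar_plus (J2 z) (Rbar_scal (1/2) (Rbar_plus (J1 z1) (J1 z2)))) /\
      forall w1 w2, w1 + w2 = 2 * z ->
       J_0 J1 J2 z = Rbar_plus (J2 z) (Rbar_scal (1/2) (Rbar_plus (J1 w1) (J1 w2))) ->
       w1 = z1 /\ w2 = z2.

Definition LJ3 (J1 J2 : R -> Rbar) (J0inf : R) : Prop :=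
  (exists alpha, 0 < alpha <= 1 /\ C1alpha_on_dom J1 alpha /\ C1alpha_on_dom J2 alpha) /\
  C1_on_dom (J_0 J1 J2) /\
  (forall z, dom J1 z <-> dom J2 z) /\
  (forall z, 0 < z -> dom J1 z) /\
  lim_pinfty J1 0 /\ lim_pinfty J2 0 /\
  lim_pinfty (J_0 J1 J2) J0inf.

Definition LJ4 (J1 J2 : R -> Rbar) (J0inf gamma : R) : Prop :=
  (exists (Psi : R -> Rbar) (c1 c2 : R),
     Rbar_convex Psi /\
     (forall z, Rbar_le (Finite 0) (Psi z)) /\
     (forall M, exists K, forall z, z < K -> Rbar_le (Finite (M * Rabs z)) (Psi z)) /\
     0 < c1 /\ 0 < c2 /\
     forall z, forall J, (J = J1 \/ J = J2) ->
       Rbar_le (Rbar_scal c1 (Rbar_minus (Psi z) (Finite 1))) (J z) /\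
       Rbar_le (J z) (Rbar_scal c2 (Rbar_max (Psi z) (Finite (Rabs z))))) /\
  (exists delta1 delta2, 0 < delta1 /\ 0 < delta2 /\
     unique_argmin J1 delta1 /\ unique_argmin J2 delta2 /\
     strictly_convex_on J1 (fun z => z < delta1 /\ dom J1 z) /\
     strictly_convex_on J2 (fun z => z < delta2 /\ dom J2 z)) /\
  0 < gamma /\ unique_argmin (J_0 J1 J2) gamma /\
  Rbar_lt (J_0 J1 J2 gamma) (Finite J0inf) /\
  (forall z, z <= gamma -> J_0 J1 J2 z = biconj (J_0 J1 J2) z).

Definition bl_term (J1 J2 : R -> Rbar) (gamma : R) (v : nat -> R) (i : nat) : Rbar :=
  Rbar_minus
    (Rbar_plus (J2 ((v (S (S i)) - v i) / 2))
       (Rbar_plus (Rbar_scal (1/2) (J1 (v (S (S i)) - v (S i))))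
                  (Rbar_scal (1/2) (J1 (v (S i) - v i)))))
    (J_0 J1 J2 gamma).

(* B(gamma); the inf over N of min over v is read as the inf over all (N, v) *)
Definition B (J1 J2 : R -> Rbar) (gamma : R) : Rbar :=
  Rbar_inf (fun x => exists (N : nat) (v : nat -> R),
    v O = 0 /\ (forall i, (N <= i)%nat -> v (S i) - v i = gamma) /\
    x = Rbar_plus (Rbar_scal (1/2) (J1 (v 1%nat - v O)))
                  (Rbar_series (bl_term J1 J2 gamma v))).

(* B_IF(m), m in N \cup {+oo}; None stands for +oo *)
Definition B_IF (J1 J2 : R -> Rbar) (gamma : R) (m : option nat) : Rbar :=
  match m with
  | None => B J1 J2 gamma
  | Some m =>
    Rbar_inf (fun x => exists (k : nat) (v : nat -> R),
      v O = 0 /\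
      x = Rbar_plus (Rbar_plus (Rbar_scal (1/2) (J1 (v 1%nat - v O)))
                               (Rbar_sum (bl_term J1 J2 gamma v) k))
                    (Rbar_scal ((2 * INR m + 1) / 2)
                       (Rbar_minus (J_CB J1 J2 (v (S k) - v k)) (J_0 J1 J2 gamma))))
  end.

Definition B_IJ (J1 J2 : R -> Rbar) (gamma : R) : Rbar :=
  Rbar_minus (Rbar_scal 2 (B J1 J2 gamma)) (Rbar_scal 2 (J_0 J1 J2 gamma)).

(* B_AIF(n), n in {1,2,...} \cup {+oo} (None = +oo, +oo - 1 = +oo);
   only used for n >= 1 *)
Definition B_AIF (J1 J2 : R -> Rbar) (gamma : R) (n : option nat) : Rbar :=
  let m := match n with None => None | Some n => Some (n - 1)%nat end in
  Rbar_minus (Rbar_plus (B_IF J1 J2 gamma m) (B J1 J2 gamma))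
             (Rbar_scal 2 (J_0 J1 J2 gamma)).

Definition Rfun (J1 J2 : R -> Rbar) (gamma t : R) : Rbar :=
  Rbar_minus
    (Rbar_minus (Rbar_plus (J2 ((gamma + t) / 2))
                           (Rbar_scal (1/2) (Rbar_plus (J1 gamma) (J1 t))))
                (J_0 J1 J2 gamma))
    (Rbar_scal (3/2) (Rbar_minus (J_CB J1 J2 t) (J_0 J1 J2 gamma))).

(* Every competitor (v, k) of B_IF(m) can be continued beyond the interface
   by steps equal to gamma.  By [LJ2] the optimal splitting at gamma is
   trivial, so J_0(gamma) = J_CB(gamma) and all the summands of the
   continued chain beyond step k vanish; it is therefore a competitor of
   B(gamma).  The only new summand, at step k with t = v^{k+1} - v^k, is at
   most (3/2)(J_CB(t) - J_0(gamma)) because R(t) <= 0, hence at most the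
   penalty ((2m+1)/2)(J_CB(t) - J_0(gamma)) of B_IF(m), since m >= 1 and
   gamma minimises J_0 <= J_CB.  Conversely a competitor of B(gamma) that
   is affine from step N on is a competitor of B_IF(m) with k = N and a
   vanishing penalty. *)

From Stdlib Require Import Reals Lra Lia ClassicalEpsilon.
Open Scope R_scope.

Lemma Rbar_le_refl x : Rbar_le x x.
Proof. destruct x; simpl; auto; lra. Qed.

Lemma Rbar_le_pinfty x : Rbar_le x p_infty.
Proof. destruct x; exact I. Qed.

Lemma Rbar_le_antisym x y : Rbar_le x y -> Rbar_le y x -> x = y.
Proof. destruct x, y; simpl; intros; try contradiction; auto; f_equal; lra. Qed.

Lemma Rbar_le_trans x y z : Rbar_le x y -> Rbar_le y z -> Rbar_le x z.
Proof. destruct x, y, z; simpl; intros; try tauto; lra. Qed.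

Lemma Rbar_plus_comm x y : Rbar_plus x y = Rbar_plus y x.
Proof. destruct x, y; simpl; try rewrite Rplus_comm; reflexivity. Qed.

Lemma Rbar_plus_0_r x : Rbar_plus x (Finite 0) = x.
Proof. destruct x; simpl; try rewrite Rplus_0_r; reflexivity. Qed.

Lemma Rbar_plus_assoc x y z :
  x <> m_infty -> y <> m_infty -> z <> m_infty ->
  Rbar_plus x (Rbar_plus y z) = Rbar_plus (Rbar_plus x y) z.
Proof. destruct x, y, z; simpl; try congruence; intros; f_equal; ring. Qed.

Lemma Rbar_plus_le_compat_l x y y' :
  Rbar_le y y' -> Rbar_le (Rbar_plus x y) (Rbar_plus x y').
Proof. destruct x, y, y'; simpl; intros; try tauto; lra. Qed.

Lemma Rbar_plus_not_m_infty x y :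
  x <> m_infty -> y <> m_infty -> Rbar_plus x y <> m_infty.
Proof. destruct x, y; simpl; congruence. Qed.

Lemma Rbar_plus_finite x y :
  x <> m_infty -> y <> m_infty -> Rbar_plus x y <> p_infty ->
  exists a b, x = Finite a /\ y = Finite b.
Proof. destruct x, y; simpl; try congruence; eauto. Qed.

Lemma Rbar_scal_p_infty c : 0 < c -> Rbar_scal c p_infty = p_infty.
Proof. simpl; intros; destruct (Rlt_dec 0 c); [reflexivity | lra]. Qed.

Lemma Rbar_scal_not_m_infty c x :
  0 < c -> x <> m_infty -> Rbar_scal c x <> m_infty.
Proof. intros; destruct x; simpl; try congruence; destruct (Rlt_dec 0 c); [congruence | lra]. Qed.

Lemma Rbar_scal_le_compat c x y :
  0 < c -> Rbar_le x y -> Rbar_le (Rbar_scal c x) (Rbar_scal c y).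
Proof.
  intros Hc; destruct x, y; simpl; try tauto;
    repeat destruct Rlt_dec; simpl; try tauto; try lra.
  intros; apply Rmult_le_compat_l; lra.
Qed.

Lemma Rbar_plus_diag x : Rbar_plus x x = Rbar_scal 2 x.
Proof. destruct x; simpl; try (f_equal; ring); destruct Rlt_dec; auto; lra. Qed.

Lemma Rbar_scal_half_diag x : Rbar_scal (1/2) (Rbar_plus x x) = x.
Proof. destruct x; simpl; try (f_equal; field); destruct Rlt_dec; auto; lra. Qed.

Lemma Rbar_glb_exists (S : Rbar -> Prop) : exists l, Rbar_is_glb S l.
Proof.
  destruct (classic (S m_infty)) as [Sm | Sm].
  { exists m_infty; split; [intros; exact I | intros m Hm; exact (Hm _ Sm)]. }
  destruct (classic (exists r, S (Finite r))) as [[r0 Sr0] | Snf].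
  2:{ exists p_infty; split.
      - intros [r | |] Sx; simpl; eauto.
      - intros; apply Rbar_le_pinfty. }
  destruct (classic (exists b, forall r, S (Finite r) -> b <= r)) as [[b Hb] | Hnb].
  2:{ exists m_infty; split; [intros; exact I |].
      intros [c | |] Hm; simpl; auto.
      - apply Hnb; exists c; intros r Sr; exact (Hm _ Sr).
      - exact (Hm _ Sr0). }
  (* the glb of the finite part is minus the lub of its mirror image *)
  set (E := fun y => S (Finite (- y))).
  assert (HE : forall r, S (Finite r) -> E (- r))
    by (intros r Sr; unfold E; rewrite Ropp_involutive; exact Sr).
  destruct (completeness E) as [L [HL1 HL2]].
  - exists (- b); intros y Ey; specialize (Hb _ Ey); lra.
  - exists (- r0); exact (HE _ Sr0).
  - exists (Finite (- L)); split.
    + intros [r | |] Sx; simpl; [specialize (HL1 _ (HE _ Sx)); lra | exact I | contradiction].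
    + intros [c | |] Hm; simpl; [| exact (Hm _ Sr0) | exact I].
      enough (L <= - c) by lra.
      apply HL2; intros y Ey; specialize (Hm _ Ey); simpl in Hm; lra.
Qed.

Lemma Rbar_inf_glb S : Rbar_is_glb S (Rbar_inf S).
Proof. unfold Rbar_inf; apply epsilon_spec, Rbar_glb_exists. Qed.

Lemma Rbar_inf_eq (S1 S2 : Rbar -> Prop) :
  (forall x, S1 x -> exists y, S2 y /\ Rbar_le y x) ->
  (forall y, S2 y -> exists x, S1 x /\ Rbar_le x y) ->
  Rbar_inf S1 = Rbar_inf S2.
Proof.
  intros H12 H21.
  destruct (Rbar_inf_glb S1) as [lb1 glb1], (Rbar_inf_glb S2) as [lb2 glb2].
  apply Rbar_le_antisym.
  - apply glb2; intros y S2y; destruct (H21 _ S2y) as [x [S1x Hxy]].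
    exact (Rbar_le_trans _ _ _ (lb1 _ S1x) Hxy).
  - apply glb1; intros x S1x; destruct (H12 _ S1x) as [y [S2y Hyx]].
    exact (Rbar_le_trans _ _ _ (lb2 _ S2y) Hyx).
Qed.

Lemma Rbar_is_lim_eventually_const (u : nat -> Rbar) N c :
  (forall n, (N <= n)%nat -> u n = c) -> Rbar_is_lim u c.
Proof.
  intros Hu; destruct c as [a | |]; simpl; intros; exists N; intros n Hn;
    rewrite (Hu n Hn); try exact I.
  exists a; split; [reflexivity | rewrite Rminus_diag, Rabs_R0; assumption].
Qed.

Lemma Rbar_is_lim_tail (u : nat -> Rbar) N c l :
  (forall n, (N <= n)%nat -> u n = c) -> Rbar_is_lim u l -> Rbar_is_lim (fun _ => c) l.
Proof.
  intros Hu; destruct l; simpl; intros Hl; intros;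
    [destruct (Hl eps) as [N' HN'] | destruct (Hl M) as [N' HN'] | destruct (Hl M) as [N' HN']];
    auto; exists O; intros;
    rewrite <- (Hu (max N N')) by lia; apply HN'; lia.
Qed.

Lemma Rbar_is_lim_const_unique c l : Rbar_is_lim (fun _ => c) l -> l = c.
Proof.
  destruct l as [a | |], c as [r | |]; simpl; intros Hl; try reflexivity; [ | exfalso ..].
  - destruct (Req_dec a r) as [-> | Hne]; [reflexivity | exfalso].
    destruct (Hl (Rabs (r - a))) as [N HN]; [apply Rabs_pos_lt; lra |].
    destruct (HN N (le_n N)) as [r' [Hr' Hlt]]; injection Hr' as <-; lra.
  - destruct (Hl 1 Rlt_0_1) as [N HN]; destruct (HN N (le_n N)) as [? [? _]]; discriminate.
  - destruct (Hl 1 Rlt_0_1) as [N HN]; destruct (HN N (le_n N)) as [? [? _]]; discriminate.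
  - destruct (Hl (r + 1)) as [N HN]; specialize (HN N (le_n N)); simpl in HN; lra.
  - destruct (Hl 0) as [N HN]; exact (HN N (le_n N)).
  - destruct (Hl (r - 1)) as [N HN]; specialize (HN N (le_n N)); simpl in HN; lra.
  - destruct (Hl 0) as [N HN]; exact (HN N (le_n N)).
Qed.

Lemma Rbar_lim_eventually_const (u : nat -> Rbar) N c :
  (forall n, (N <= n)%nat -> u n = c) -> Rbar_lim u = c.
Proof.
  intros Hu; apply Rbar_is_lim_const_unique, (Rbar_is_lim_tail u N); [exact Hu |].
  unfold Rbar_lim; apply epsilon_spec; exists c; exact (Rbar_is_lim_eventually_const u N c Hu).
Qed.

Lemma Rbar_sum_ext f g n :
  (forall i, (i < n)%nat -> f i = g i) -> Rbar_sum f n = Rbar_sum g n.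
Proof.
  induction n as [| n IH]; intros Hfg; simpl; [reflexivity |].
  rewrite IH, Hfg; [reflexivity | lia | intros; apply Hfg; lia].
Qed.

Lemma Rbar_sum_not_m_infty f n :
  (forall i, f i <> m_infty) -> Rbar_sum f n <> m_infty.
Proof.
  intros Hf; induction n as [| n IH]; simpl; [discriminate |].
  apply Rbar_plus_not_m_infty; auto.
Qed.

Lemma Rbar_series_eventually_zero f N :
  (forall i, (N <= i)%nat -> f i = Finite 0) -> Rbar_series f = Rbar_sum f N.
Proof.
  intros Hf; apply (Rbar_lim_eventually_const _ N).
  intros n Hn; induction Hn as [| n Hn IH]; [reflexivity |].
  simpl; rewrite Hf, Rbar_plus_0_r by lia; exact IH.
Qed.

Fixpoint extend_affine (v : nat -> R) (k : nat) (s : R) (n : nat) : R :=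
  match n with
  | O => v O
  | S i => if Nat.leb i k then v (S i) else extend_affine v k s i + s
  end.

Lemma extend_affine_agree v k s n :
  (n <= S k)%nat -> extend_affine v k s n = v n.
Proof.
  destruct n as [| i]; simpl; [reflexivity |].
  intros Hi; replace (Nat.leb i k) with true by (symmetry; apply Nat.leb_le; lia).
  reflexivity.
Qed.

Lemma extend_affine_step v k s i :
  (k < i)%nat -> extend_affine v k s (S i) - extend_affine v k s i = s.
Proof.
  intros Hi; simpl; replace (Nat.leb i k) with false by (symmetry; apply Nat.leb_gt; lia).
  ring.
Qed.

Definition interface_term (J1 J2 : R -> Rbar) (gamma t : R) : Rbar :=
  Rbar_minus
    (Rbar_plus (J2 ((gamma + t) / 2))
       (Rbar_plus (Rbar_scal (1/2) (J1 gamma)) (Rbar_scal (1/2) (J1 t))))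
    (J_0 J1 J2 gamma).

Lemma bl_term_interface J1 J2 gamma v i :
  v (S (S i)) - v (S i) = gamma ->
  bl_term J1 J2 gamma v i = interface_term J1 J2 gamma (v (S i) - v i).
Proof.
  intros Hstep; unfold bl_term, interface_term.
  replace ((v (S (S i)) - v i) / 2) with ((gamma + (v (S i) - v i)) / 2) by lra.
  rewrite Hstep; reflexivity.
Qed.

Lemma J_0_le_J_CB J1 J2 z : Rbar_le (J_0 J1 J2 z) (J_CB J1 J2 z).
Proof.
  unfold J_0, J_CB; rewrite (Rbar_plus_comm (J1 z)).
  apply Rbar_plus_le_compat_l; rewrite <- (Rbar_scal_half_diag (J1 z)).
  apply Rbar_scal_le_compat; [lra |].
  apply Rbar_inf_glb; exists z, z; split; [ring | reflexivity].
Qed.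

Lemma LJ2_J_0_diagonal J1 J2 z :
  LJ2 J1 J2 -> dom (J_0 J1 J2) z -> J_0 J1 J2 z = biconj (J_0 J1 J2) z ->
  J_0 J1 J2 z = Rbar_plus (J2 z) (Rbar_scal (1/2) (Rbar_plus (J1 z) (J1 z))).
Proof.
  intros HLJ2 Hdom Hbiconj.
  destruct (HLJ2 z Hdom Hbiconj) as [z1 [z2 [[Hsum Hopt] Huniq]]].
  (* the swapped pair is optimal too, so by uniqueness the optimal pair is diagonal *)
  destruct (Huniq z2 z1) as [E21 _]; [lra | rewrite (Rbar_plus_comm (J1 z2)); exact Hopt |].
  replace z1 with z in Hopt by lra; replace z2 with z in Hopt by lra; exact Hopt.
Qed.

Section InterfacePenalty.

Variables (J1 J2 : R -> Rbar) (gamma g1 g2 : R).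
Hypotheses (J1_not_m_infty : forall z, J1 z <> m_infty)
           (J2_not_m_infty : forall z, J2 z <> m_infty)
           (dom_J1_J2 : forall z, dom J1 z <-> dom J2 z)
           (J1_gamma : J1 gamma = Finite g1)
           (J2_gamma : J2 gamma = Finite g2)
           (J_0_gamma : J_0 J1 J2 gamma = Finite (g1 + g2))
           (J_0_gamma_le_J_CB : forall t, Rbar_le (J_0 J1 J2 gamma) (J_CB J1 J2 t))
           (R_nonpos : forall t, dom J1 t -> Rbar_le (Rfun J1 J2 gamma t) (Finite 0)).

Lemma bl_term_not_m_infty v i : bl_term J1 J2 gamma v i <> m_infty.
Proof.
  unfold bl_term, Rbar_minus; rewrite J_0_gamma.
  apply Rbar_plus_not_m_infty; [| discriminate].
  apply Rbar_plus_not_m_infty; [auto |].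
  apply Rbar_plus_not_m_infty; apply Rbar_scal_not_m_infty; auto; lra.
Qed.

Lemma bl_term_affine v i :
  v (S i) - v i = gamma -> v (S (S i)) - v (S i) = gamma ->
  bl_term J1 J2 gamma v i = Finite 0.
Proof.
  intros Hstep0 Hstep1; rewrite bl_term_interface, Hstep0 by exact Hstep1.
  unfold interface_term; replace ((gamma + gamma) / 2) with gamma by field.
  rewrite J1_gamma, J2_gamma, J_0_gamma; simpl; f_equal; field.
Qed.

Lemma interface_term_le_penalty c t :
  3/2 <= c ->
  Rbar_le (interface_term J1 J2 gamma t)
          (Rbar_scal c (Rbar_minus (J_CB J1 J2 t) (J_0 J1 J2 gamma))).
Proof.
  intros Hc; destruct (J1 t) as [a1 | |] eqn:E1; [| | exfalso; exact (J1_not_m_infty _ E1)].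
  2:{ unfold J_CB; rewrite E1, J_0_gamma.
      destruct (J2 t) as [a2 | |] eqn:E2; [| | exfalso; exact (J2_not_m_infty _ E2)];
        simpl Rbar_minus; rewrite Rbar_scal_p_infty by lra; apply Rbar_le_pinfty. }
  assert (Hdom1 : dom J1 t) by (unfold dom; rewrite E1; discriminate).
  pose proof (proj1 (dom_J1_J2 t) Hdom1) as Hdom2; unfold dom in Hdom2.
  destruct (J2 t) as [a2 | |] eqn:E2; [| contradiction | exfalso; exact (J2_not_m_infty _ E2)].
  pose proof (J_0_gamma_le_J_CB t) as Hmin; pose proof (R_nonpos t Hdom1) as HR.
  unfold J_CB in Hmin; unfold Rfun, J_CB in HR; unfold interface_term, J_CB.
  rewrite E1, E2, J1_gamma, J_0_gamma in *.
  destruct (J2 ((gamma + t) / 2)) as [h | |] eqn:E3;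
    [| simpl in HR; contradiction | exfalso; exact (J2_not_m_infty _ E3)].
  simpl in *.
  assert (3/2 * (a1 + a2 + - (g1 + g2)) <= c * (a1 + a2 + - (g1 + g2)))
    by (apply Rmult_le_compat_r; lra).
  lra.
Qed.

Lemma B_IF_eq_B m : (1 <= m)%nat -> B_IF J1 J2 gamma (Some m) = B J1 J2 gamma.
Proof.
  intros Hm.
  assert (Hc : 3/2 <= (2 * INR m + 1) / 2) by (apply le_INR in Hm; simpl in Hm; lra).
  unfold B_IF, B; apply Rbar_inf_eq.
  - intros x [k [v [Hv0 ->]]].
    set (w := extend_affine v k gamma).
    assert (Hw : forall n, (n <= S k)%nat -> w n = v n) by exact (extend_affine_agree v k gamma).
    assert (Hwstep : forall i, (k < i)%nat -> w (S i) - w i = gamma)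
      by exact (extend_affine_step v k gamma).
    eexists; split.
    { exists (S k), w; split; [rewrite Hw by lia; exact Hv0 |].
      split; [intros i Hi; apply Hwstep; lia | reflexivity]. }
    rewrite (Rbar_series_eventually_zero _ (S k))
      by (intros i Hi; apply bl_term_affine; apply Hwstep; lia).
    cbn [Rbar_sum].
    rewrite (Rbar_sum_ext _ (bl_term J1 J2 gamma v))
      by (intros i Hi; unfold bl_term; rewrite !Hw by lia; reflexivity).
    rewrite Rbar_plus_assoc; auto using Rbar_sum_not_m_infty, bl_term_not_m_infty.
    2: apply Rbar_scal_not_m_infty; auto; lra.
    apply Rbar_plus_le_compat_l.
    rewrite bl_term_interface by (apply Hwstep; lia).
    rewrite !Hw by lia; apply interface_term_le_penalty, Hc.
  - intros x [N [v [Hv0 [Hstep ->]]]].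
    eexists; split; [exists N, v; split; [exact Hv0 | reflexivity] |].
    rewrite (Rbar_series_eventually_zero _ N)
      by (intros i Hi; apply bl_term_affine; apply Hstep; lia).
    unfold J_CB; rewrite (Hstep N (le_n N)), J1_gamma, J2_gamma, J_0_gamma.
    simpl Rbar_minus; simpl Rbar_scal.
    rewrite Rplus_opp_r, Rmult_0_r, Rbar_plus_0_r; apply Rbar_le_refl.
Qed.

End InterfacePenalty.

Theorem lemma5p4 (J1 J2 : R -> Rbar) (J0inf gamma : R) :
  (forall z, J1 z <> m_infty) -> (forall z, J2 z <> m_infty) ->
  LJ1 J1 J2 -> LJ2 J1 J2 -> LJ3 J1 J2 J0inf -> LJ4 J1 J2 J0inf gamma ->
  (forall t, dom J1 t -> Rbar_le (Rfun J1 J2 gamma t) (Finite 0)) ->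
  (forall m : nat, (1 <= m)%nat -> B_IF J1 J2 gamma (Some m) = B J1 J2 gamma) /\
  B_IF J1 J2 gamma None = B J1 J2 gamma /\
  (forall n : nat, (2 <= n)%nat -> B_AIF J1 J2 gamma (Some n) = B_IJ J1 J2 gamma) /\
  B_AIF J1 J2 gamma None = B_IJ J1 J2 gamma.
Proof.
  intros HJ1 HJ2 _ HLJ2 [_ [_ [Hdom _]]] [_ [_ [_ [[Hargmin _] [Hlt Hbiconj]]]]] HR.
  assert (Hdom0 : dom (J_0 J1 J2) gamma)
    by (intros E; rewrite E in Hlt; exact Hlt).
  assert (HCB : J_0 J1 J2 gamma = J_CB J1 J2 gamma).
  { rewrite (LJ2_J_0_diagonal _ _ _ HLJ2 Hdom0 (Hbiconj _ (Rle_refl _))).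
    rewrite Rbar_scal_half_diag; apply Rbar_plus_comm. }
  destruct (Rbar_plus_finite (J1 gamma) (J2 gamma)) as [g1 [g2 [E1 E2]]]; auto.
  { fold (J_CB J1 J2 gamma); rewrite <- HCB; exact Hdom0. }
  assert (HB : forall m, (1 <= m)%nat -> B_IF J1 J2 gamma (Some m) = B J1 J2 gamma).
  { intros m; apply (B_IF_eq_B _ _ _ g1 g2); auto.
    - rewrite HCB; unfold J_CB; rewrite E1, E2; reflexivity.
    - intros t; exact (Rbar_le_trans _ _ _ (Hargmin t) (J_0_le_J_CB J1 J2 t)). }
  unfold B_AIF, B_IJ; split; [exact HB |]; split; [reflexivity |].
  split; [intros n Hn; rewrite HB by lia |]; simpl; rewrite Rbar_plus_diag; reflexivity.
Qed.
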